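(* Let $n\ge 1$ and let $\mathcal{L}$ be a fully dissipative $n$-qubit Lindbladian all of whose jump operators are $n$-qubit Pauli operators, i.e. $$\mathcal{L}(\rho)=\sum_{j}\gamma_j\Big(P_j\rho P_j^{\dagger}-\tfrac12\{P_j^{\dagger}P_j,\rho\}\Big)=\sum_j\gamma_j\big(P_j\rho P_j-\rho\big),$$ where each $P_j$ is a tensor product of single-qubit operators from $\{I,X,Y,Z\}$ and $\gamma_j\ge 0$. Then $\mathcal{L}$ is quantum programmable.
   Context: A Lindbladian on a finite-dimensional Hilbert space $\mathcal{H}_S$ is a superoperator of GKSL form $\mathcal{L}(\rho)=-i[H,\rho]+\sum_j\gamma_j(L_j\rho L_j^\dagger-\frac12\{L_j^\dagger L_j,\rho\})$ with $H$ Hermitian and $\gamma_j\ge 0$; ''fully dissipative'' means $H=0$. It generates the quantum dynamical semigroup $(e^{t\mathcal{L}})_{t\ge0}$ of CPTP maps. Given a class $\Omega$ of linear maps from operators on $\mathcal{H}_S\otimes\mathcal{H}_P$ to operators on $\mathcal{H}_S$ (with $\mathcal{H}_P$ a finite-dimensional program space), $\mathcal{L}$ is (exactly) $\Omega$-programmable if there exist a map $\mathcal{P}\in\Omega$ and a continuous one-parameter family of density operators $(\pi_t)_{t\ge0}$ on $\mathcal{H}_P$ such that $\mathcal{P}(\rho\otimes\pi_t)=e^{t\mathcal{L}}(\rho)$ for all $t\ge0$ and all $\rho$ (equivalently, the maps $\mathcal{P}(\cdot\otimes\pi_t)$ and $e^{t\mathcal{L}}$ coincide). $\mathcal{L}$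 is quantum programmable if this holds with $\Omega$ the set of completely positive trace-preserving (CPTP) maps. *)

From HB Require Import structures.
From mathcomp Require Import all_boot all_order all_algebra.
From mathcomp Require Import all_classical all_reals all_analysis.
From mathcomp Require Import complex mxtens.
Set Implicit Arguments. Unset Strict Implicit. Unset Printing Implicit Defensive.
Import Order.TTheory GRing.Theory Num.Theory.
Import numFieldNormedType.Exports.
Local Open Scope ring_scope.
Local Open Scope classical_set_scope.

Section QDefs.
Variable R : realType.
Local Notation C := (R[i]).

Definition adjmx {m n} (A : 'M[C]_(m, n)) : 'M[C]_(n, m) :=
  \matrix_(i, j) Num.conj (A j i).

Definition psd {d} (A : 'M[C]_d) : Prop :=
  forall v : 'cV[C]_d, 0 <= ((adjmx v) *m A *m v) 0 0.

Definition density {d} (A : 'M[C]_d) : Prop := psd A /\ \tr A = 1.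

Definition linmap {a b} (Phi : 'M[C]_a -> 'M[C]_b) : Prop :=
  forall (c : C) X Y, Phi (c *: X + Y) = c *: Phi X + Phi Y.

(* block (p,q) of a (k*a)x(k*a) matrix, for the tensor decomposition C^k (x) C^a *)
Definition blockmx {k a} (p q : 'I_k) (X : 'M[C]_(k * a)) : 'M[C]_a :=
  \matrix_(r, s) X (mxtens_index (p, r)) (mxtens_index (q, s)).

(* (id_k (x) Phi) applied to X *)
Definition ampl {a b} (k : nat) (Phi : 'M[C]_a -> 'M[C]_b) (X : 'M[C]_(k * a))
  : 'M[C]_(k * b) :=
  \sum_(p < k) \sum_(q < k) (delta_mx p q *t Phi (blockmx p q X)).

Definition completely_positive {a b} (Phi : 'M[C]_a -> 'M[C]_b) : Prop :=
  forall (k : nat) (X : 'M[C]_(k * a)), psd X -> psd (@ampl a b k Phi X).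

Definition trace_preserving {a b} (Phi : 'M[C]_a -> 'M[C]_b) : Prop :=
  forall X, \tr (Phi X) = \tr X.

Definition CPTP {a b} (Phi : 'M[C]_a -> 'M[C]_b) : Prop :=
  linmap Phi /\ completely_positive Phi /\ trace_preserving Phi.

(* single-qubit Paulis: 0 = I, 1 = X, 2 = Y, 3 = Z *)
Definition pauli1 (c : 'I_4) : 'M[C]_2 :=
  \matrix_(i < 2, j < 2)
    match val c with
    | 0 => if i == j then 1 else 0
    | 1 => if i == j then 0 else 1
    | 2 => if i == j then 0 else
             (if val i == 0 then - 'i else 'i)
    | _ => if i == j then (if val i == 0 then 1 else -1) else 0
    end.

Definition qbit n (i : 'I_(2 ^ n)) (k : nat) : 'I_2 :=
  @Ordinal 2 ((i %/ 2 ^ k) %% 2) (@ltn_pmod _ 2 (erefl true)).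

(* n-qubit Pauli operator sigma_{s 0} (x) ... (x) sigma_{s (n-1)}, entrywise *)
Definition pauli n (s : 'I_n -> 'I_4) : 'M[C]_(2 ^ n) :=
  \matrix_(i, j) \prod_(k < n) pauli1 (s k) (qbit i k) (qbit j k).

Definition lindbladian {d m} (gamma : 'I_m -> R) (Ls : 'I_m -> 'M[C]_d)
  (rho : 'M[C]_d) : 'M[C]_d :=
  \sum_(j < m) ((gamma j)%:C)%C *:
     (Ls j *m rho *m adjmx (Ls j)
      - (2%:R)^-1 *: (adjmx (Ls j) *m Ls j *m rho + rho *m (adjmx (Ls j) *m Ls j))).

Definition cvgC (u : nat -> C) (l : C) : Prop :=
  (fun N : nat => (complex.Re (u N) : R)) @ \oo --> (complex.Re l : R) /\
  (fun N : nat => (complex.Im (u N) : R)) @ \oo --> (complex.Im l : R).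

Definition is_expL {d} (L : 'M[C]_d -> 'M[C]_d) (t : R) (rho sigma : 'M[C]_d)
  : Prop :=
  forall i j, cvgC (fun N => \sum_(k < N) (((t ^+ k / (k`!)%:R)%:C)%C * (iter k L rho) i j))
                   (sigma i j).

Definition continuousC_on (A : set R) (f : R -> C) : Prop :=
  {within A, continuous (fun t => complex.Re (f t))} /\
  {within A, continuous (fun t => complex.Im (f t))}.

Definition quantum_programmable {d} (L : 'M[C]_d -> 'M[C]_d) : Prop :=
  exists (dP : nat) (Phi : 'M[C]_(d * dP) -> 'M[C]_d) (pi : R -> 'M[C]_dP),
    CPTP Phi /\
    (forall t, 0 <= t -> density (pi t)) /\
    (forall a b, continuousC_on [set t | 0 <= t] (fun t => pi t a b)) /\
    (forall t, 0 <= t -> forall rho : 'M[C]_d, is_expL L t rho (Phi (rho *t pi t))).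

End QDefs.

From HB Require Import structures.
From mathcomp Require Import all_boot all_order all_algebra.
From mathcomp Require Import all_classical all_reals all_analysis.
From mathcomp Require Import complex mxtens ring.
Import Order.TTheory GRing.Theory Num.Theory.
Import numFieldNormedType.Exports.
Set Implicit Arguments. Unset Strict Implicit. Unset Printing Implicit Defensive.
Local Open Scope ring_scope.
Local Open Scope classical_set_scope.

(* Pauli operators are Hermitian involutions that pairwise commute up to a sign, so the
   maps Ad P_j : X |-> P_j X P_j are commuting involutions and
   L = sum_j gamma_j (Ad P_j - id) is diagonalised by the characters of the group
   (Z/2)^m that they generate: on the Fourier mode indexed by a set T of jumps, L acts as
   the scalar -2 sum_(j in T) gamma_j.  Summing the exponential series mode by mode gives
   e^(tL) = sum_S q_S(t) Ad U_S with U_S = prod_(j in S) P_j, where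
   q_S(t) = prod_(j in S) (1 - e^(-2 t gamma_j))/2 * prod_(j notin S) (1 + e^(-2 t gamma_j))/2
   is a probability distribution depending continuously on t.  So e^(tL) is executed by the
   program state pi_t = diag (q_S(t))_S and the fixed controlled-unitary channel
   rho (x) |S><S| |-> U_S rho U_S^*. *)

Section Adjoint.
Variable R : realType.
Local Notation C := (R[i]).

Lemma adjmxK m n (A : 'M[C]_(m, n)) : adjmx (adjmx A) = A.
Proof. by apply/matrixP => i j; rewrite !mxE conjCK. Qed.

Lemma adjmxM m n p (A : 'M[C]_(m, n)) (B : 'M[C]_(n, p)) :
  adjmx (A *m B) = adjmx B *m adjmx A.
Proof.
apply/matrixP => i j; rewrite !mxE rmorph_sum; apply: eq_bigr => k _.
by rewrite !mxE rmorphM mulrC.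
Qed.

Lemma adjmxZ m n c (A : 'M[C]_(m, n)) : adjmx (c *: A) = c^* *: adjmx A.
Proof. by apply/matrixP => i j; rewrite !mxE rmorphM. Qed.

Lemma adjmx1 m : adjmx (1%:M : 'M[C]_m) = 1%:M.
Proof. by apply/matrixP => i j; rewrite !mxE rmorph_nat eq_sym. Qed.

Definition Ad a b (V : 'M[C]_(b, a)) (X : 'M[C]_a) : 'M[C]_b := V *m X *m adjmx V.

Lemma AdZ a b (V : 'M[C]_(b, a)) c X : Ad V (c *: X) = c *: Ad V X.
Proof. by rewrite /Ad -scalemxAr -scalemxAl. Qed.

Lemma Ad_sum a b (V : 'M[C]_(b, a)) I (r : seq I) (P : pred I) (F : I -> 'M[C]_a) :
  Ad V (\sum_(i <- r | P i) F i) = \sum_(i <- r | P i) Ad V (F i).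
Proof. by rewrite /Ad mulmx_sumr mulmx_suml. Qed.

Lemma AdM a b c (V : 'M[C]_(c, b)) (W : 'M[C]_(b, a)) X :
  Ad (V *m W) X = Ad V (Ad W X).
Proof. by rewrite /Ad adjmxM !mulmxA. Qed.

Lemma Ad1 a (X : 'M[C]_a) : Ad 1%:M X = X.
Proof. by rewrite /Ad adjmx1 mul1mx mulmx1. Qed.

Lemma Ad_phase a b (V : 'M[C]_(b, a)) e X : `|e| = 1 -> Ad (e *: V) X = Ad V X.
Proof.
move=> e1; rewrite /Ad adjmxZ -!scalemxAl -scalemxAr scalerA.
by rewrite -normCK e1 expr1n scale1r.
Qed.

End Adjoint.

Section PauliAlgebra.
Variable R : realType.
Local Notation C := (R[i]).

Lemma conj_pauli1 c x y : (pauli1 R c y x)^* = pauli1 R c x y.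
Proof.
rewrite !mxE.
case: c => [[|[|[|[|c]]]] Hc] //=;
case: x => [[|[|x]] Hx] //=; case: y => [[|[|y]] Hy] //=.
all: rewrite ?rmorphN ?rmorph1 ?rmorph0 /= ?conjCi ?opprK //.
Qed.

Lemma pauli1_mul_self c x y :
  \sum_(b < 2) pauli1 R c x b * pauli1 R c b y = (x == y)%:R.
Proof.
have ii : 'i * 'i = -1 :> C by rewrite -expr2 sqrCi.
rewrite !big_ord_recr big_ord0 /= !mxE add0r.
case: c => [[|[|[|[|c]]]] Hc] //=;
case: x => [[|[|x]] Hx] //=; case: y => [[|[|y]] Hy] //=.
all: rewrite ?mul0r ?mulr0 ?add0r ?addr0 ?mul1r ?mulr1 ?mulrN ?mulNr ?opprK ?ii ?opprK //.
all: by rewrite ?mulr1n ?mulr1.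
Qed.

Definition pauli1_sign (a c : 'I_4) : C :=
  if (val a == 0%N) || (val c == 0%N) || (a == c) then 1 else -1.

Lemma pauli1_commute a c x y :
  \sum_(b < 2) pauli1 R a x b * pauli1 R c b y =
  pauli1_sign a c * \sum_(b < 2) pauli1 R c x b * pauli1 R a b y.
Proof.
have ii : 'i * 'i = -1 :> C by rewrite -expr2 sqrCi.
rewrite /pauli1_sign !big_ord_recr !big_ord0 /= !mxE !add0r.
case: a => [[|[|[|[|a]]]] Ha] //=;
case: c => [[|[|[|[|c]]]] Hc] //=;
case: x => [[|[|x]] Hx] //=; case: y => [[|[|y]] Hy] //=.
all: rewrite ?mul0r ?mulr0 ?add0r ?addr0 ?mul1r ?mulr1 ?mulrN ?mulNr ?opprK ?ii ?opprK ?oppr0 //.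
all: ring.
Qed.

Lemma norm_pauli1_sign a c : `|pauli1_sign a c| = 1.
Proof. by rewrite /pauli1_sign; case: ifP; rewrite ?normrN normr1. Qed.

Definition qbits n (i : 'I_(2 ^ n)) : {ffun 'I_n -> 'I_2} := [ffun k : 'I_n => qbit i k].

Lemma qbits_inj n : injective (@qbits n).
Proof.
suff digits_inj x y : (x < 2 ^ n)%N -> (y < 2 ^ n)%N ->
    (forall k, (k < n)%N -> x %/ 2 ^ k %% 2 = y %/ 2 ^ k %% 2)%N -> x = y.
  move=> i j /ffunP eq_ij; apply/val_inj/digits_inj; rewrite ?ltn_ord // => k ltkn.
  by have := eq_ij (Ordinal ltkn); rewrite !ffunE => /(congr1 val).
elim: n x y => [|n IH] x y.
  by rewrite expn0 !ltnS !leqn0 => /eqP -> /eqP ->.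
move=> ltx lty eq_xy; have := eq_xy 0%N isT; rewrite expn0 !divn1 => eq0.
suff eq_half : (x %/ 2 = y %/ 2)%N by rewrite (divn_eq x 2) (divn_eq y 2) eq_half eq0.
apply: IH; rewrite ?ltn_divLR -?expnSr // => k ltkn.
by have := eq_xy k.+1 ltkn; rewrite expnS !divnMA.
Qed.

Lemma sum_qbit_prod n (F : 'I_n -> 'I_2 -> C) :
  \sum_(l < 2 ^ n) \prod_(k < n) F k (qbit l k) = \prod_(k < n) \sum_(b < 2) F k b.
Proof.
have qbits_bij : bijective (@qbits n).
  by apply: inj_card_bij; [exact: qbits_inj | rewrite card_ffun !card_ord].
rewrite bigA_distr_bigA /= (reindex _ (onW_bij _ qbits_bij)) /=.
by apply: eq_bigr => l _; apply: eq_bigr => k _; rewrite ffunE.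
Qed.

Lemma pauli_mulE n (s s' : 'I_n -> 'I_4) i j :
  (pauli R s *m pauli R s') i j =
  \prod_(k < n) \sum_(b < 2) pauli1 R (s k) (qbit i k) b * pauli1 R (s' k) b (qbit j k).
Proof. by rewrite -sum_qbit_prod !mxE; apply: eq_bigr => l _; rewrite !mxE -big_split. Qed.

Lemma pauli_mul_self n (s : 'I_n -> 'I_4) : pauli R s *m pauli R s = 1%:M.
Proof.
apply/matrixP => i j; rewrite pauli_mulE mxE.
under eq_bigr do rewrite pauli1_mul_self.
have [<-|neq_ij] := eqVneq i j; first by rewrite big1 // => k _; rewrite eqxx.
have [k neq_k] : exists k : 'I_n, qbit i k != qbit j k.
  apply/existsP; move: neq_ij; apply: contraNT; rewrite negb_exists => /forallP eq_ij.
  by apply/eqP/qbits_inj/ffunP => k; rewrite !ffunE; apply/eqP/negPn/eq_ij.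
by rewrite (bigD1 k) //= (negbTE neq_k) mul0r.
Qed.

Lemma adjmx_pauli n (s : 'I_n -> 'I_4) : adjmx (pauli R s) = pauli R s.
Proof.
apply/matrixP => i j; rewrite !mxE rmorph_prod.
by apply: eq_bigr => k _; apply: conj_pauli1.
Qed.

Lemma pauli_commute n (s s' : 'I_n -> 'I_4) :
  exists2 e : C, `|e| = 1 & pauli R s *m pauli R s' = e *: (pauli R s' *m pauli R s).
Proof.
exists (\prod_(k < n) pauli1_sign (s k) (s' k)).
  by rewrite normr_prod big1 // => k _; apply: norm_pauli1_sign.
apply/matrixP => i j; rewrite pauli_mulE [RHS]mxE pauli_mulE -big_split /=.
by apply: eq_bigr => k _; rewrite pauli1_commute.
Qed.

End PauliAlgebra.

Section Convergence.
Variable R : realType.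
Local Notation C := (R[i]).

Lemma cvg_sum T (F : set_system T) (FF : Filter F) I (r : seq I)
    (f : I -> T -> R) (l : I -> R) :
  (forall i, f i x @[x --> F] --> l i) ->
  \sum_(i <- r) f i x @[x --> F] --> \sum_(i <- r) l i.
Proof.
move=> cvg_f; elim: r => [|i r IH].
  by rewrite big_nil; under eq_fun do rewrite big_nil; exact: cvg_cst.
by rewrite big_cons; under eq_fun do rewrite big_cons; exact: cvgD.
Qed.

Lemma cvgC_sum (I : finType) (a : I -> nat -> R) (l : I -> R) (z : I -> C) :
  (forall i, a i N @[N --> \oo] --> l i) ->
  cvgC (fun N => \sum_i (a i N)%:C%C * z i) (\sum_i (l i)%:C%C * z i).
Proof.
move=> cvg_a.
have cvg_part (phi : {additive C -> R}) : (forall x w, phi (x%:C%C * w) = x * phi w) ->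
    phi (\sum_i (a i N)%:C%C * z i) @[N --> \oo] --> phi (\sum_i (l i)%:C%C * z i).
  move=> phiM; rewrite raddf_sum; under eq_bigr do rewrite phiM.
  have -> : (fun N => phi (\sum_i (a i N)%:C%C * z i)) = fun N => \sum_i a i N * phi (z i).
    by apply: funext => N; rewrite raddf_sum; apply: eq_bigr => i _; rewrite phiM.
  by apply: cvg_sum => i; apply: cvgM; [exact: cvg_a | exact: cvg_cst].
by split; apply: cvg_part => x [u v] /=; rewrite mul0r ?subr0 ?addr0.
Qed.

End Convergence.

Section Characters.
Variables (R : realType) (m : nat).
Local Notation Sub := {ffun 'I_m -> bool}.

Definition toggle j (S : Sub) : Sub := [ffun i => if i == j then ~~ S i else S i].

Lemma toggleK j : involutive (toggle j).
Proof. by move=> S; apply/ffunP => i; rewrite !ffunE; case: eqP => // _; apply: negbK. Qed.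

Definition sign_at (T : Sub) j : R := if T j then -1 else 1.

Definition character (T S : Sub) : R := \prod_j (if S j && T j then -1 else 1).

Lemma characterC T S : character T S = character S T.
Proof. by apply: eq_bigr => j _; rewrite andbC. Qed.

Lemma character_toggle T S j : character T (toggle j S) = sign_at T j * character T S.
Proof.
rewrite /character (bigD1 j) //= [in RHS](bigD1 j) //= ffunE eqxx mulrA.
congr (_ * _); last by apply: eq_bigr => i neq_ij; rewrite ffunE (negbTE neq_ij).
by rewrite /sign_at; case: (S j); case: (T j); rewrite /= ?mulr1 ?mulN1r ?opprK.
Qed.

Lemma sum_character S : \sum_T character T S = if S == [ffun=> false] then 2 ^+ m else 0.
Proof.
rewrite /character -(bigA_distr_bigA (fun j b => if S j && b then -1 else 1 : R)) /=.
under eq_bigr do rewrite big_bool /=.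
have [->|nz_S] := eqVneq S [ffun=> false].
  by under eq_bigr do rewrite ffunE /=; rewrite prodr_const card_ord.
have [j Sj] : exists j, S j.
  apply/existsP; move: nz_S; apply: contraNT; rewrite negb_exists => /forallP S0.
  by apply/eqP/ffunP => j; rewrite ffunE; apply/negbTE/S0.
by rewrite (bigD1 j) //= Sj /= addNr mul0r.
Qed.

Variable gamma : 'I_m -> R.

Definition eigenvalue (T : Sub) : R := \sum_j gamma j * (sign_at T j - 1).

Definition weight (S : Sub) (t : R) : R :=
  (2 ^+ m)^-1 * \sum_T character T S * expR (t * eigenvalue T).

Lemma eigenvalue0 : eigenvalue [ffun=> false] = 0.
Proof. by rewrite /eigenvalue big1 // => j _; rewrite /sign_at ffunE subrr mulr0. Qed.

Lemma sum_weight t : \sum_S weight S t = 1.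
Proof.
rewrite /weight -mulr_sumr exchange_big /=.
under eq_bigr do rewrite -mulr_suml.
under eq_bigr do under eq_bigr do rewrite characterC.
under eq_bigr do rewrite sum_character.
rewrite (bigD1 [ffun=> false]) //= eqxx big1 ?addr0; last first.
  by move=> T /negbTE ->; rewrite mul0r.
by rewrite eigenvalue0 mulr0 expR0 mulr1 mulVf // expf_neq0 // pnatr_eq0.
Qed.

Lemma weight_ge0 S t : (forall j, 0 <= gamma j) -> 0 <= t -> 0 <= weight S t.
Proof.
move=> gamma_ge0 t_ge0; apply: mulr_ge0; first by rewrite invr_ge0 exprn_ge0.
(* The Fourier sum factorises over the jumps, with factors 1 +- e^(-2 t gamma_j). *)
pose f j (b : bool) : R :=
  (if S j && b then -1 else 1) * expR (t * (gamma j * ((if b then -1 else 1) - 1))).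
have -> : \sum_T character T S * expR (t * eigenvalue T) = \prod_j \sum_(b : bool) f j b.
  rewrite bigA_distr_bigA /=; apply: eq_bigr => T _.
  rewrite /character /eigenvalue mulr_sumr expR_sum -big_split /=.
  by apply: eq_bigr => j _; rewrite /f /sign_at.
apply: prodr_ge0 => j _; rewrite big_bool /f /= andbT andbF mul1r.
rewrite subrr !mulr0 expR0; case: (S j); last by rewrite mul1r addr_ge0 ?expR_ge0.
rewrite mulN1r addrC subr_ge0 expR_le1.
by rewrite mulr_ge0_le0 // mulr_ge0_le0 // subr_le0 lerN10.
Qed.

Lemma continuous_weight S : continuous (weight S).
Proof.
move=> t; apply: cvgM; first exact: cvg_cst.
apply: cvg_sum => T; apply: cvgM; first exact: cvg_cst.
apply: continuous_comp; last exact: continuous_expR.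
by apply: cvgM; [exact: cvg_id | exact: cvg_cst].
Qed.

End Characters.

Arguments sign_at {R m}.
Arguments character {R m}.

Section CommutingInvolutions.
Variables (R : realType) (d m : nat) (P : 'I_m -> 'M[R[i]]_d).
Local Notation C := (R[i]).
Local Notation Sub := {ffun 'I_m -> bool}.
Hypothesis P_herm : forall j, adjmx (P j) = P j.
Hypothesis P_invol : forall j, P j *m P j = 1%:M.
Hypothesis P_commute :
  forall i j, exists2 e : C, `|e| = 1 & P i *m P j = e *: (P j *m P i).

Definition prod_sub_seq (r : seq 'I_m) (S : Sub) : 'M[C]_d :=
  foldr (fun j M => if S j then P j *m M else M) 1%:M r.

Definition prod_sub (S : Sub) : 'M[C]_d := prod_sub_seq (enum 'I_m) S.

Lemma prod_sub_seq_toggle_notin j r S :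
  j \notin r -> prod_sub_seq r (toggle j S) = prod_sub_seq r S.
Proof.
elim: r => //= i r IH; rewrite in_cons negb_or => /andP[neq_ji notin_r].
by rewrite ffunE eq_sym (negbTE neq_ji) IH.
Qed.

Lemma prod_sub_seq_toggle j r S : uniq r -> j \in r ->
  exists2 e : C, `|e| = 1 & P j *m prod_sub_seq r S = e *: prod_sub_seq r (toggle j S).
Proof.
elim: r => //= i r IH /andP[notin_r uniq_r]; rewrite in_cons => /orP[/eqP eq_ji|in_r].
  subst i; exists 1; first exact: normr1.
  rewrite ffunE eqxx prod_sub_seq_toggle_notin // scale1r.
  by case: (S j) => //=; rewrite mulmxA P_invol mul1mx.
have [e' e'1 IHe] := IH uniq_r in_r.
have neq_ij : i != j by apply: contraNneq notin_r => ->.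
rewrite ffunE (negbTE neq_ij); case: (S i); last by exists e'.
have [e e1 comm_ji] := P_commute j i.
exists (e * e'); first by rewrite normrM e1 e'1 mulr1.
by rewrite mulmxA comm_ji -scalemxAl -mulmxA IHe -scalemxAr scalerA.
Qed.

Lemma Ad_toggle j S X : Ad (P j) (Ad (prod_sub S) X) = Ad (prod_sub (toggle j S)) X.
Proof.
rewrite -AdM /prod_sub.
have [e e1 ->] := prod_sub_seq_toggle S (enum_uniq 'I_m) (mem_enum _ j).
exact: Ad_phase.
Qed.

Lemma prod_sub_unitary S : adjmx (prod_sub S) *m prod_sub S = 1%:M.
Proof.
rewrite /prod_sub; elim: (enum 'I_m) => /= [|j r IH]; first by rewrite adjmx1 mul1mx.
case: (S j) => //.
by rewrite adjmxM mulmxA -(mulmxA _ _ (P j)) P_herm P_invol mulmx1.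
Qed.

Lemma prod_sub0 : prod_sub [ffun=> false] = 1%:M.
Proof. by rewrite /prod_sub; elim: (enum 'I_m) => //= j r IH; rewrite ffunE. Qed.

Variable gamma : 'I_m -> R.
Local Notation L := (lindbladian gamma P).
Local Notation eigenvalue := (eigenvalue gamma).
Local Notation weight := (weight gamma).

Lemma lindbladianE X : L X = \sum_j (gamma j)%:C%C *: (Ad (P j) X - X).
Proof.
apply: eq_bigr => j _; congr (_ *: (_ - _)).
rewrite P_herm P_invol mul1mx mulmx1.
have -> : X + X = 2%:R *: X by rewrite scaler_nat mulr2n.
by rewrite scalerA mulVf ?pnatr_eq0 ?scale1r.
Qed.

Lemma lindbladianZ c X : L (c *: X) = c *: L X.
Proof.
rewrite !lindbladianE scaler_sumr; apply: eq_bigr => j _.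
by rewrite AdZ -scalerBr !scalerA mulrC.
Qed.

Lemma lindbladian_sum I (r : seq I) (F : I -> 'M[C]_d) :
  L (\sum_(i <- r) F i) = \sum_(i <- r) L (F i).
Proof.
under [RHS]eq_bigr do rewrite lindbladianE.
rewrite lindbladianE exchange_big /=; apply: eq_bigr => j _.
by rewrite Ad_sum -sumrB scaler_sumr.
Qed.

Definition mode (T : Sub) (X : 'M[C]_d) : 'M[C]_d :=
  (2 ^+ m)^-1%:C%C *: \sum_S (character T S)%:C%C *: Ad (prod_sub S) X.

Lemma Ad_mode j T X : Ad (P j) (mode T X) = (sign_at T j)%:C%C *: mode T X.
Proof.
rewrite /mode AdZ Ad_sum.
under eq_bigr do rewrite AdZ Ad_toggle.
rewrite (reindex_inj (inv_inj (toggleK j))) /=.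
under eq_bigr do rewrite toggleK character_toggle rmorphM -scalerA.
by rewrite -scaler_sumr !scalerA mulrC.
Qed.

Lemma lindbladian_mode T X : L (mode T X) = (eigenvalue T)%:C%C *: mode T X.
Proof.
rewrite lindbladianE.
under eq_bigr do rewrite Ad_mode -[X in _ - X]scale1r -scalerBl scalerA.
rewrite -scaler_suml /eigenvalue rmorph_sum; congr (_ *: _).
by apply: eq_bigr => j _; rewrite rmorphM rmorphB.
Qed.

Lemma sum_modes X : \sum_T mode T X = X.
Proof.
rewrite /mode -scaler_sumr exchange_big /=.
under eq_bigr do rewrite -scaler_suml -rmorph_sum sum_character.
rewrite (bigD1 [ffun=> false]) //= eqxx big1 ?addr0; last first.
  by move=> S /negbTE ->; rewrite rmorph0 scale0r.
by rewrite prod_sub0 Ad1 scalerA -rmorphM mulVf ?rmorph1 ?scale1r.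
Qed.

Lemma iter_lindbladian k X :
  iter k L X = \sum_T ((eigenvalue T) ^+ k)%:C%C *: mode T X.
Proof.
elim: k => [|k IH].
  by rewrite -[LHS]sum_modes; apply: eq_bigr => T _; rewrite expr0 scale1r.
rewrite iterS IH lindbladian_sum; apply: eq_bigr => T _.
by rewrite lindbladianZ lindbladian_mode scalerA -rmorphM exprSr.
Qed.

Lemma sum_exp_modes t X :
  \sum_T (expR (t * eigenvalue T))%:C%C *: mode T X =
  \sum_S (weight S t)%:C%C *: Ad (prod_sub S) X.
Proof.
rewrite /mode; under eq_bigr do rewrite scalerA scaler_sumr.
rewrite exchange_big /=; apply: eq_bigr => S _.
rewrite /weight mulr_sumr rmorph_sum scaler_suml; apply: eq_bigr => T _.
by rewrite scalerA !rmorphM; congr (_ *: _); ring.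
Qed.

Lemma is_expL_lindbladian t X :
  is_expL L t X (\sum_S (weight S t)%:C%C *: Ad (prod_sub S) X).
Proof.
move=> i j; rewrite -sum_exp_modes summxE.
under [X in cvgC _ X]eq_bigr do rewrite mxE.
suff -> : (fun N => \sum_(k < N) (t ^+ k / k`!%:R)%:C%C * iter k L X i j) =
          (fun N => \sum_T (series (exp_coeff (t * eigenvalue T)) N)%:C%C * mode T X i j).
  by apply: cvgC_sum => T; apply: is_cvg_series_exp_coeff.
apply: funext => N; under eq_bigr do rewrite iter_lindbladian summxE mulr_sumr.
rewrite exchange_big /=; apply: eq_bigr => T _.
rewrite /series /= big_mkord rmorph_sum mulr_suml; apply: eq_bigr => k _.
by rewrite mxE /exp_coeff /= !rmorphM exprMn; ring.
Qed.

End CommutingInvolutions.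

Section Kraus.
Variable R : realType.
Local Notation C := (R[i]).

Lemma psd_Ad a b (V : 'M[C]_(b, a)) X : psd X -> psd (Ad V X).
Proof.
by move=> psdX v; have := psdX (adjmx V *m v); rewrite adjmxM adjmxK /Ad !mulmxA.
Qed.

Lemma psd_sum a I (r : seq I) (F : I -> 'M[C]_a) :
  (forall i, psd (F i)) -> psd (\sum_(i <- r) F i).
Proof.
move=> psdF v; rewrite mulmx_sumr mulmx_suml summxE.
by apply: sumr_ge0 => i _; apply: psdF.
Qed.

Lemma sum_blockmx k a (X : 'M[C]_(k * a)) :
  \sum_(p < k) \sum_(q < k) (delta_mx p q *t blockmx p q X) = X.
Proof.
apply/matrixP => i j.
case: (mxtens_indexP i) => p0 x; case: (mxtens_indexP j) => q0 y.
rewrite summxE; under eq_bigr do rewrite summxE.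
under eq_bigr do under eq_bigr do rewrite tensmxE mxE.
rewrite (bigD1 p0) //= [X in _ + X = _]big1 ?addr0; last first.
  by move=> p neq_p; apply: big1 => q _; rewrite eq_sym (negbTE neq_p) mul0r.
rewrite (bigD1 q0) //= [X in _ + X = _]big1 ?addr0; last first.
  by move=> q neq_q; rewrite [q0 == q]eq_sym (negbTE neq_q) andbF mul0r.
by rewrite !eqxx mul1r mxE.
Qed.

Lemma adjmx_tens1mx k a b (V : 'M[C]_(b, a)) :
  adjmx (1%:M *t V : 'M[C]_(k * b, k * a)) = 1%:M *t adjmx V.
Proof.
apply/matrixP => i j.
case: (mxtens_indexP i) => p x; case: (mxtens_indexP j) => q y.
by rewrite mxE !tensmxE !mxE rmorphM rmorph_nat eq_sym.
Qed.

Lemma tensmx_sumr k l a b (A : 'M[C]_(k, l)) I (r : seq I) (F : I -> 'M[C]_(a, b)) :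
  A *t (\sum_(i <- r) F i) = \sum_(i <- r) (A *t F i).
Proof.
apply/matrixP => i j; rewrite !mxE summxE summxE mulr_sumr.
by apply: eq_bigr => x _; rewrite mxE.
Qed.

Lemma ampl_Ad k a b (V : 'M[C]_(b, a)) (X : 'M[C]_(k * a)) :
  ampl (Ad V) X = Ad (1%:M *t V : 'M[C]_(k * b, k * a)) X.
Proof.
rewrite -[in RHS](sum_blockmx X) Ad_sum; apply: eq_bigr => p _.
rewrite Ad_sum; apply: eq_bigr => q _.
by rewrite /Ad adjmx_tens1mx !tensmx_mul mul1mx mulmx1.
Qed.

Lemma ampl_sum k a b I (r : seq I) (F : I -> 'M[C]_a -> 'M[C]_b) (X : 'M[C]_(k * a)) :
  ampl (fun Y => \sum_(i <- r) F i Y) X = \sum_(i <- r) ampl (F i) X.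
Proof.
rewrite /ampl; under eq_bigr do under eq_bigr do rewrite tensmx_sumr.
by under eq_bigr do rewrite exchange_big; rewrite exchange_big.
Qed.

Definition kraus a b I (r : seq I) (K : I -> 'M[C]_(b, a)) (X : 'M[C]_a) : 'M[C]_b :=
  \sum_(i <- r) Ad (K i) X.

Lemma kraus_CPTP a b I (r : seq I) (K : I -> 'M[C]_(b, a)) :
  \sum_(i <- r) adjmx (K i) *m K i = 1%:M -> CPTP (kraus r K).
Proof.
move=> complete; split; [|split].
- move=> c X Y; rewrite /kraus scaler_sumr -big_split /=; apply: eq_bigr => i _.
  by rewrite /Ad mulmxDr mulmxDl -scalemxAr -scalemxAl.
- move=> k X psdX; rewrite /kraus ampl_sum; apply: psd_sum => i.
  by rewrite ampl_Ad; apply: psd_Ad.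
- move=> X; rewrite /kraus raddf_sum /=.
  under eq_bigr do rewrite /Ad mxtrace_mulC mulmxA.
  by rewrite -raddf_sum /= -mulmx_suml complete mul1mx.
Qed.

End Kraus.

Section ControlledUnitary.
Variables (R : realType) (d k : nat) (V : 'I_k -> 'M[R[i]]_d).
Local Notation C := (R[i]).
Hypothesis V_unitary : forall p, adjmx (V p) *m V p = 1%:M.

(* The partial matrix element 1 (x) <p|, with the system index first as in [rho *t pi]. *)
Definition register_proj (p : 'I_k) : 'M[C]_(d, d * k) :=
  \matrix_(x, c) (mxtens_index (x, p) == c)%:R.

Lemma register_projE l p (M : 'M[C]_(d * k, l)) x c :
  (register_proj p *m M) x c = M (mxtens_index (x, p)) c.
Proof.
rewrite mxE (bigD1 (mxtens_index (x, p))) //= big1 ?addr0.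
  by rewrite mxE eqxx mul1r.
by move=> c' neq_c'; rewrite mxE eq_sym (negbTE neq_c') mul0r.
Qed.

Lemma adj_register_projE l p (M : 'M[C]_(l, d * k)) c y :
  (M *m adjmx (register_proj p)) c y = M c (mxtens_index (y, p)).
Proof.
rewrite mxE (bigD1 (mxtens_index (y, p))) //= big1 ?addr0.
  by rewrite !mxE eqxx rmorph1 mulr1.
by move=> c' neq_c'; rewrite !mxE eq_sym (negbTE neq_c') rmorph0 mulr0.
Qed.

Lemma sum_register_proj : \sum_p adjmx (register_proj p) *m register_proj p = 1%:M.
Proof.
have index_eq x p y q : (mxtens_index (x, p) == mxtens_index (y, q)) = (x == y) && (p == q).
  by rewrite (inj_eq (can_inj (@mxtens_indexK _ _))) xpair_eqE.
apply/matrixP => c c'; case: (mxtens_indexP c) => x0 p0.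
rewrite summxE (bigD1 p0) //= big1 ?addr0; last first.
  move=> p neq_p; rewrite mxE big1 // => x _.
  by rewrite !mxE index_eq [p == p0](negbTE neq_p) andbF rmorph0 mul0r.
rewrite mxE (bigD1 x0) //= big1 ?addr0; last first.
  by move=> x neq_x; rewrite !mxE index_eq (negbTE neq_x) rmorph0 mul0r.
by rewrite !mxE eqxx rmorph1 mul1r.
Qed.

Definition controlled_channel : 'M[C]_(d * k) -> 'M[C]_d :=
  kraus (index_enum 'I_k) (fun p => V p *m register_proj p).

Lemma controlled_channel_CPTP : CPTP controlled_channel.
Proof.
apply: kraus_CPTP; rewrite -[RHS]sum_register_proj; apply: eq_bigr => p _.
by rewrite adjmxM mulmxA -(mulmxA (adjmx _)) V_unitary mulmx1.
Qed.

Lemma controlled_channel_tens rho (pi : 'M[C]_k) :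
  controlled_channel (rho *t pi) = \sum_p pi p p *: Ad (V p) rho.
Proof.
apply: eq_bigr => p _; rewrite AdM -AdZ; congr (Ad (V p) _).
apply/matrixP => x y.
by rewrite /Ad adj_register_projE register_projE tensmxE mxE mulrC.
Qed.

End ControlledUnitary.

Section DiagonalState.
Variables (R : realType) (k : nat).
Local Notation C := (R[i]).

Definition diag_state (w : 'I_k -> R) : 'M[C]_k := diag_mx (\row_a (w a)%:C%C).

Lemma density_diag_state w :
  (forall a, 0 <= w a) -> \sum_a w a = 1 -> density (diag_state w).
Proof.
move=> w_ge0 sum_w1; split.
  move=> v; rewrite mxE; apply: sumr_ge0 => b _.
  rewrite mul_mx_diag !mxE mulrAC mulrC mulr_ge0 ?lecR //.
  by rewrite mulrC mul_conjC_ge0.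
by rewrite mxtrace_diag; under eq_bigr do rewrite mxE; rewrite -rmorph_sum sum_w1.
Qed.

Lemma continuous_diag_state (w : 'I_k -> R -> R) A : (forall a, continuous (w a)) ->
  forall a b, continuousC_on A (fun t => diag_state (w ^~ t) a b).
Proof.
move=> cont_w a b.
have -> : (fun t => diag_state (w ^~ t) a b) = fun t => (if a == b then w a t else 0)%:C%C.
  by apply: funext => t; rewrite !mxE; case: (a == b).
split; apply: continuous_subspaceT; case: (a == b) => /=;
  by [exact: cont_w | exact: cst_continuous].
Qed.

End DiagonalState.

Theorem theorem1 (R : realType) (n : nat) (hn : (1 <= n)%N) (m : nat)
  (gamma : 'I_m -> R) (s : 'I_m -> 'I_n -> 'I_4)
  (hgamma : forall j, 0 <= gamma j) :
  quantum_programmable (lindbladian gamma (fun j => @pauli R n (s j))).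
Proof.
pose P j := pauli R (s j).
have P_herm j : adjmx (P j) = P j by apply: adjmx_pauli.
have P_invol j : P j *m P j = 1%:M by apply: pauli_mul_self.
have P_commute i j := @pauli_commute R n (s i) (s j).
pose U (p : 'I_#|{ffun 'I_m -> bool}|) := prod_sub P (enum_val p).
pose w t (p : 'I_#|{ffun 'I_m -> bool}|) := weight gamma (enum_val p) t.
have sum_enum (V : zmodType) (F : {ffun 'I_m -> bool} -> V) :
  \sum_(p < #|{ffun 'I_m -> bool}|) F (enum_val p) = \sum_S F S.
  by rewrite -big_enum_val.
exists #|{ffun 'I_m -> bool}|, (controlled_channel U), (fun t => diag_state (w t)).
split; first by apply: controlled_channel_CPTP => p; apply: prod_sub_unitary.
split.
  move=> t t_ge0; apply: density_diag_state => [p|]; first exact: weight_ge0.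
  by rewrite (sum_enum _ (weight gamma ^~ t)) sum_weight.
split; first by apply: continuous_diag_state => p; apply: continuous_weight.
move=> t _ rho; rewrite controlled_channel_tens.
under eq_bigr do rewrite !mxE eqxx mulr1n.
rewrite (sum_enum _ (fun S => (weight gamma S t)%:C%C *: Ad (prod_sub P S) rho)).
exact: is_expL_lindbladian.
Qed.
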